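(* Consider a Zosin–Khuller type instance built from $H=(\mathcal{A}\uplus\mathcal{B},E_H)$, $K$, $\{M_t\}_{t\in K}$ with parameters $d,d',k,s$ as in the context. Let $\alpha\ge 1$ be a real number. Suppose that for every $u\in\mathcal{A}$ there is a set $J_u\subseteq K$ with $|J_u|\le d/\alpha$ such that for every edge $\{u,v\}\in E_H$ (with $v\in\mathcal{B}$) we have $|K_v\setminus J_u|\le d'/\alpha$. Then every subgraph of $G$ that contains a directed path from $r$ to every terminal $t\in K$ has total cost at least $\alpha|\mathcal{B}|/s$.
   Context: A Zosin–Khuller type instance is specified by: (P1) a bipartite graph $H=(\mathcal{A}\uplus\mathcal{B},E_H)$ with $|\mathcal{A}|\le|\mathcal{B}|$, every vertex of $\mathcal{A}$ of degree $d$ and every vertex of $\mathcal{B}$ of degree $d'$; (P2) a set $K$ of $k$ terminals and a partition $\{M_t\}_{t\in K}$ of $E_H$ into $k$ matchings, each of size $s$ (so $sk=d|\mathcal{A}|=d'|\mathcal{B}|=|E_H|$; edges in $M_t$ are said to have color $t$); (P3) for $v\in\mathcal{B}$, $K_v=\{t\in K: v \text{ is matched in } M_t\}$, so $|K_v|=d'$. The DST instance is the directed graph $G$ with vertex set $\{r\}\uplus\mathcal{A}\uplus\mathcal{B}\uplus\mathcal{B}'\uplus K$, where $\mathcal{B}'$ is a disjoint copy of $\mathcal{B}$ via a bijection $\pi:\mathcal{B}\to\mathcal{B}'$, and edges: $E_1=\{(r,u):u\in\mathcal{A}\}$ each of cost $|\mathcal{B}|/|\mathcal{A}|$; $E_2=\{(u,v):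 \{u,v\}\in E_H, u\in\mathcal{A}, v\in\mathcal{B}\}$ each of cost $0$; $E_3=\{(v,\pi(v)):v\in\mathcal{B}\}$ each of cost $1$; $E_4=\{(\pi(v),t): v\in\mathcal{B}, t\in K_v\}$ each of cost $0$. The root is $r$ and the terminal set is $K$. *)

From HB Require Import structures.
From mathcomp Require Import all_boot all_order all_algebra.
Set Implicit Arguments. Unset Strict Implicit. Unset Printing Implicit Defensive.
Import Order.TTheory GRing.Theory Num.Theory.

(* EH : {set A * B}  edges of H (an edge {u,v} with u in A, v in B is (u,v)).
   col : A * B -> K  the colour of an edge (only meaningful on EH);
   M_t := [set e in EH | col e == t]. *)

Definition Mcol (A B K : finType) (EH : {set A * B}) (col : A * B -> K) (t : K)
  : {set A * B} := [set e in EH | col e == t].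

Definition is_matching (A B : finType) (M : {set A * B}) : Prop :=
  forall e1 e2, e1 \in M -> e2 \in M ->
    (e1.1 = e2.1 \/ e1.2 = e2.2) -> e1 = e2.

Definition Kv (A B K : finType) (EH : {set A * B}) (col : A * B -> K) (v : B)
  : {set K} := [set t | [exists u : A, (u, v) \in Mcol EH col t]].

Definition DV (A B K : finType) : finType := option (A + (B + (B + K))).
Definition vr (A B K : finType) : DV A B K := None.
Definition vA (A B K : finType) (u : A) : DV A B K := Some (inl u).
Definition vB (A B K : finType) (v : B) : DV A B K := Some (inr (inl v)).
Definition vB' (A B K : finType) (v : B) : DV A B K := Some (inr (inr (inl v))).
Definition vK (A B K : finType) (t : K) : DV A B K := Some (inr (inr (inr t))).

Definition E1 (A B K : finType) : {set DV A B K * DV A B K} :=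
  [set e | [exists u : A, e == (vr A B K, vA B K u)]].
Definition E2 (A B K : finType) (EH : {set A * B}) : {set DV A B K * DV A B K} :=
  [set e | [exists u : A, exists v : B, ((u, v) \in EH) && (e == (vA B K u, vB A K v))]].
Definition E3 (A B K : finType) : {set DV A B K * DV A B K} :=
  [set e | [exists v : B, e == (vB A K v, vB' A K v)]].
Definition E4 (A B K : finType) (EH : {set A * B}) (col : A * B -> K)
  : {set DV A B K * DV A B K} :=
  [set e | [exists v : B, exists t : K, (t \in Kv EH col v) && (e == (vB' A K v, vK A B t))]].

Definition EG (A B K : finType) (EH : {set A * B}) (col : A * B -> K)
  : {set DV A B K * DV A B K} :=
  E1 A B K :|: E2 K EH :|: E3 A B K :|: E4 EH col.

Definition edge_cost (R : realFieldType) (A B K : finType) (e : DV A B K * DV A B K) : R :=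
  if e \in E1 A B K then (#|B|%:R / #|A|%:R)%R
  else if e \in E3 A B K then 1%R else 0%R.

Definition total_cost (R : realFieldType) (A B K : finType) (F : {set DV A B K * DV A B K}) : R :=
  (\sum_(e in F) edge_cost R e)%R.

Definition has_path (A B K : finType) (F : {set DV A B K * DV A B K}) (x y : DV A B K) : bool :=
  connect (fun a b => (a, b) \in F) x y.

From HB Require Import structures.
From mathcomp Require Import all_boot all_order all_algebra.
From mathcomp Require Import ring.
Import Order.TTheory GRing.Theory Num.Theory.

Set Implicit Arguments. Unset Strict Implicit.

(* Let A_F be the vertices u with (r, u) in F and B_F those with (v, pi v) in F.
   A terminal t can only be reached along r -> u -> v -> pi v -> t, so
   K is covered by the sets J_u (u in A_F) together with the sets K_v \ J_u for
   edges {u, v} with u in A_F and v in B_F.  Hence alpha k <= d |A_F| + d' |B_F|,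
   while the cost of F is at least (|B|/|A|) |A_F| + |B_F|; the double counting
   |A| d = |B| d' = k s of the edges of H turns the first bound into the second. *)

Lemma leq_card_bigcup (I T : finType) (P : pred I) (S : I -> {set T}) :
  (#|\bigcup_(i | P i) S i| <= \sum_(i | P i) #|S i|)%N.
Proof.
apply: (big_ind2 (fun (X : {set T}) n => #|X| <= n)%N) => [||//].
  by rewrite cards0.
move=> X1 n1 X2 n2 le1 le2.
exact: leq_trans (leq_card_setU X1 X2).1 (leq_add le1 le2).
Qed.

Section DoubleCounting.
Variables (A B : finType) (E : {set A * B}).

Lemma card_set_pair_sum : #|E| = (\sum_u \sum_(v | (u, v) \in E) 1)%N.
Proof. by rewrite pair_big_dep -sum1_card; apply: eq_bigl => -[]. Qed.

Lemma card_edges_left_regular d :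
  (forall u, #|[set v | (u, v) \in E]| = d) -> #|E| = (#|A| * d)%N.
Proof.
move=> deg; rewrite card_set_pair_sum.
rewrite (eq_bigr (fun _ => d)) ?sum_nat_const ?cardE // => u _.
by rewrite sum1dep_card deg.
Qed.

Lemma card_edges_right_regular d' :
  (forall v, #|[set u | (u, v) \in E]| = d') -> #|E| = (#|B| * d')%N.
Proof.
move=> deg; rewrite card_set_pair_sum (exchange_big_dep xpredT) //=.
rewrite (eq_bigr (fun _ => d')) ?sum_nat_const ?cardE // => v _.
by rewrite sum1dep_card deg.
Qed.

End DoubleCounting.

Lemma card_colour_classes (T C : finType) (E : {set T}) (col : T -> C) s :
  (forall c, #|[set e in E | col e == c]| = s) -> #|E| = (#|C| * s)%N.
Proof.
move=> size_class; rewrite -sum1_card (partition_big col xpredT) //=.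
rewrite (eq_bigr (fun _ => s)) ?sum_nat_const ?cardE // => c _.
by rewrite -(size_class c) -sum1_card; apply: eq_bigl => e; rewrite !inE.
Qed.

Section Reachability.
Variables (A B K : finType) (EH : {set A * B}) (col : A * B -> K).
Variable F : {set DV A B K * DV A B K}.
Hypothesis subF : F \subset EG EH col.

Definition root_arc (u : A) : bool := (vr A B K, vA B K u) \in F.
Definition copy_arc (v : B) : bool := (vB A K v, vB' A K v) \in F.
Definition entered (v : B) : bool := [exists u, root_arc u && ((u, v) \in EH)].

(* Invariant of the vertices reachable from r inside F: each one records the
   arcs of F through which it must have been reached. *)
Definition reach_certified (x : DV A B K) : bool :=
  match x with
  | None => true
  | Some (inl u) => root_arc u
  | Some (inr (inl v)) => entered v
  | Some (inr (inr (inl v))) => copy_arc v && entered v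
  | Some (inr (inr (inr t))) =>
      [exists v, [&& copy_arc v, entered v & t \in Kv EH col v]]
  end.

Lemma reach_certified_step x y :
  (x, y) \in F -> reach_certified x -> reach_certified y.
Proof.
move=> xyF; have := subsetP subF _ xyF; rewrite !inE -!orbA.
case/or4P=> [/existsP [u] | /existsP [u /existsP [v /andP [uv]]] |
             /existsP [v] | /existsP [v /existsP [t /andP [tv]]]];
  move=> /eqP [ex ey]; subst x y => /=.
- by [].
- by move=> ru; apply/existsP; exists u; rewrite ru.
- by move=> ev; rewrite /copy_arc xyF.
- by case/andP=> cv ev; apply/existsP; exists v; rewrite cv ev.
Qed.

Lemma has_path_certified y :
  has_path F (vr A B K) y -> reach_certified y.
Proof.
case/connectP=> p + ->; have : reach_certified (vr A B K) by [].
elim: p (vr A B K) => [|z p IHp] x //= rx /andP [xz zp].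
exact: IHp (reach_certified_step xz rx) zp.
Qed.

End Reachability.

Local Open Scope ring_scope.

Lemma edge_cost_ge0 (R : realFieldType) (A B K : finType) (e : DV A B K * DV A B K) :
  0 <= edge_cost R e.
Proof. by rewrite /edge_cost; do 2?case: ifP => _; rewrite ?divr_ge0 ?ler01. Qed.

Lemma total_cost_ge (R : realFieldType) (A B K : finType)
    (F : {set DV A B K * DV A B K}) :
  (#|B|%:R / #|A|%:R) *+ #|[set u | root_arc F u]| + #|[set v | copy_arc F v]|%:R
    <= total_cost R F.
Proof.
set AF := [set u | _]; set BF := [set v | _].
pose X := [set (vr A B K, vA B K u) | u in AF].
pose Y := [set (vB A K v, vB' A K v) | v in BF].
have XYF : X :|: Y \subset F.
  by apply/subsetP=> e /setUP [] /imsetP [w]; rewrite inE => ? ->.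
have disjXY : [disjoint X & Y].
  by apply/pred0P=> e /=; apply/negP=> /andP [/imsetP [u _ ->] /imsetP []].
rewrite /total_cost (big_setID (X :|: Y)) /= (setIidPr XYF).
rewrite (eq_bigl [predU X & Y]) => [|e]; last by rewrite !inE.
rewrite bigU //=.
apply: ler_wpDr; first by apply: sumr_ge0 => e _; apply: edge_cost_ge0.
apply: lerD.
- rewrite big_imset /=; last by move=> u1 u2 _ _ [].
  rewrite -sumr_const; apply: ler_sum => u _.
  by rewrite /edge_cost ifT // inE; apply/existsP; exists u.
- rewrite big_imset /=; last by move=> v1 v2 _ _ [].
  rewrite -sumr_const; apply: ler_sum => v _.
  rewrite /edge_cost ifF; last by rewrite inE; apply/existsP => -[].
  by rewrite ifT // inE; apply/existsP; exists v.
Qed.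

Section TerminalCover.
Variables (R : realFieldType) (A B K : finType) (EH : {set A * B}).
Variables (KB : B -> {set K}) (J : A -> {set K}) (alpha : R) (d d' : nat).
Variables (AF : {set A}) (BR : {set B}).
Hypothesis alpha_gt0 : 0 < alpha.
Hypothesis card_J : forall u, u \in AF -> #|J u|%:R <= d%:R / alpha.
Hypothesis card_KBDJ : forall u v, u \in AF -> (u, v) \in EH ->
  #|KB v :\: J u|%:R <= d'%:R / alpha.
Hypothesis BR_entered : forall v, v \in BR -> exists2 u, u \in AF & (u, v) \in EH.
Hypothesis BR_cover : forall t, exists2 v, v \in BR & t \in KB v.

Let U := \bigcup_(u in AF) J u.

Lemma card_terminals_le_sum :
  (#|K| <= \sum_(u in AF) #|J u| + \sum_(v in BR) #|KB v :\: U|)%N.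
Proof.
have cover : [set: K] \subset U :|: \bigcup_(v in BR) (KB v :\: U).
  apply/subsetP=> t _; have [v vBR tv] := BR_cover t.
  rewrite inE; case: (boolP (t \in U)) => //= tU.
  by apply/bigcupP; exists v; rewrite // inE tU.
rewrite -cardsT; apply: leq_trans (subset_leq_card cover) _.
apply: leq_trans (leq_card_setU _ _).1 _.
exact: leq_add (leq_card_bigcup _ _) (leq_card_bigcup _ _).
Qed.

Lemma alpha_card_terminals_le : alpha * #|K|%:R <= d%:R *+ #|AF| + d'%:R *+ #|BR|.
Proof.
have := card_terminals_le_sum; rewrite -(ler_nat R).
move=> /(ler_wpM2l (ltW alpha_gt0)) /le_trans; apply.
rewrite natrD !natr_sum mulrDr !mulr_sumr -!sumr_const; apply: lerD; apply: ler_sum.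
  by move=> u uAF; rewrite mulrC -ler_pdivlMr // card_J.
move=> v /BR_entered [u uAF uv]; rewrite mulrC -ler_pdivlMr //.
apply: le_trans (card_KBDJ uAF uv); rewrite ler_nat subset_leq_card //.
exact/setDS/bigcup_sup.
Qed.

End TerminalCover.

Lemma cost_ratio_bound (R : realFieldType) (nA nB d d' k s x y : nat) (alpha : R) :
  (nA * d = k * s)%N -> (nB * d' = k * s)%N -> (0 < k)%N ->
  alpha * k%:R <= d%:R *+ x + d'%:R *+ y ->
  alpha * nB%:R / s%:R <= nB%:R / nA%:R *+ x + y%:R.
Proof.
move=> eA eB k_gt0 le_alpha_k.
have [->|s_gt0] := posnP s.
  by rewrite invr0 mulr0 addr_ge0 ?mulrn_wge0 ?divr_ge0.
have : (0 < nA * d)%N by rewrite eA muln_gt0 k_gt0.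
rewrite muln_gt0 => /andP [nA_gt0 _].
have eAR : (s%:R * k%:R : R) = nA%:R * d%:R by rewrite -natrM mulnC -eA natrM.
have eBR : (s%:R * k%:R : R) = nB%:R * d'%:R by rewrite -natrM mulnC -eB natrM.
have scaled : (nB%:R / nA%:R *+ x + y%:R) * (s%:R * k%:R)
    = nB%:R * (d%:R *+ x + d'%:R *+ y) :> R.
  rewrite -[_ / _ *+ x]mulr_natr -[d%:R *+ x]mulr_natr -[d'%:R *+ y]mulr_natr.
  rewrite mulrDl {1}eAR eBR; field.
  by rewrite pnatr_eq0 -lt0n.
rewrite ler_pdivrMr ?ltr0n // -(ler_pM2r (_ : 0 < k%:R)) ?ltr0n //.
rewrite -[_ * s%:R * k%:R]mulrA scaled mulrAC [X in X <= _]mulrC.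
by apply: ler_wpM2l; rewrite ?ler0n.
Qed.

Theorem lemma3p1 (R : realFieldType) (A B K : finType)
  (EH : {set A * B}) (col : A * B -> K) (d d' k s : nat)
  (hAB : (#|A| <= #|B|)%N)
  (hdegA : forall u : A, #|[set v : B | (u, v) \in EH]| = d)
  (hdegB : forall v : B, #|[set u : A | (u, v) \in EH]| = d')
  (hk : #|K| = k) (hk0 : (0 < k)%N)
  (hmatch : forall t : K, is_matching (Mcol EH col t))
  (hsize : forall t : K, #|Mcol EH col t| = s)
  (alpha : R) (halpha : 1 <= alpha)
  (hJ : exists J : A -> {set K},
      forall u : A, (#|J u|%:R <= d%:R / alpha) /\
        (forall v : B, (u, v) \in EH -> #|Kv EH col v :\: J u|%:R <= d'%:R / alpha)) :
  forall F : {set DV A B K * DV A B K},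
    F \subset EG EH col ->
    (forall t : K, has_path F (vr A B K) (vK A B t)) ->
    alpha * #|B|%:R / s%:R <= total_cost R F.
Proof.
move=> F subF reach; have [J boundJ] := hJ.
set AF := [set u | root_arc F u]; set BF := [set v | copy_arc F v].
set BR := [set v in BF | entered EH F v].
have BR_cover t : exists2 v, v \in BR & t \in Kv EH col v.
  have /existsP [v /and3P [cv ev tv]] := has_path_certified subF (reach t).
  by exists v; rewrite // !inE cv.
have BR_entered v : v \in BR -> exists2 u, u \in AF & (u, v) \in EH.
  by rewrite !inE => /andP [_ /existsP [u /andP [ru uv]]]; exists u; rewrite ?inE.
have card_EH := card_colour_classes hsize; rewrite hk in card_EH.
have eA : (#|A| * d = k * s)%N by rewrite -card_EH (card_edges_left_regular hdegA).
have eB : (#|B| * d' = k * s)%N by rewrite -card_EH (card_edges_right_regular hdegB).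
have := alpha_card_terminals_le (lt_le_trans ltr01 halpha)
  (fun u _ => (boundJ u).1) (fun u v _ => (boundJ u).2 v) BR_entered BR_cover.
rewrite hk => /(cost_ratio_bound eA eB hk0) bound.
apply: le_trans (total_cost_ge R F); apply: le_trans bound _.
rewrite lerD2l ler_nat subset_leq_card //.
by apply/subsetP => v; rewrite !inE => /andP[].
Qed.
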